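(* Let $E$ be a countable set and $\mathcal{C}=\langle E,X\rangle$ a stable configuration structure. Then for every finite configuration $x\in X$, the symmetric residual $x\odot\mathcal{C}$ is stable. Consequently, $\odot$ is a (partial) group action on stable configuration structures.
   Context: A configuration structure over $E$ is a pair $\mathcal{C}=\langle E,X\rangle$ with $X\subseteq\mathcal{P}(E)$ (its configurations). For finite $x\in X$, $x\odot\mathcal{C}:=\langle E,\{y\mathbin{\triangle}x\mid y\in X\}\rangle$, where $\mathbin{\triangle}$ is symmetric difference. $\mathcal{C}$ is stable if it is: rooted ($\emptyset\in X$); connected (for all $x\in X$ with $x\neq\emptyset$ there is $a\in x$ with $x\setminus\{a\}\in X$); closed under bounded union (for all $x,y,z\in X$, $x\cup y\subseteq z$ implies $x\cup y\in X$); closed under intersection (for all $x,y\in X$, $x\cap y\in X$); coherent (for all $x,y,z\in X$, if there are $z',z'',z'''\in X$ with $x\cup y\subseteq z'$, $y\cup z\subseteq z''$, $x\cup z\subseteq z'''$, then $x\cup y\cup z\in X$). *)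

From mathcomp Require Import all_boot.
From mathcomp Require Import boolp classical_sets cardinality.
Set Implicit Arguments. Unset Strict Implicit. Unset Printing Implicit Defensive.
Local Open Scope classical_set_scope.

(* A configuration structure <E, X> over the type E is represented by its
   set of configurations X : set (set E). *)

Definition symdiff (E : Type) (x y : set E) : set E := (x `\` y) `|` (y `\` x).

Definition residual (E : Type) (x : set E) (X : set (set E)) : set (set E) :=
  (fun y => symdiff y x) @` X.

Definition rooted (E : Type) (X : set (set E)) : Prop := X set0.

Definition connected_cs (E : Type) (X : set (set E)) : Prop :=
  forall x, X x -> x <> set0 -> exists2 a, x a & X (x `\ a).

Definition bounded_union_closed (E : Type) (X : set (set E)) : Prop :=
  forall x y z, X x -> X y -> X z -> x `|` y `<=` z -> X (x `|` y).

Definition intersection_closed (E : Type) (X : set (set E)) : Prop :=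
  forall x y, X x -> X y -> X (x `&` y).

Definition coherent (E : Type) (X : set (set E)) : Prop :=
  forall x y z, X x -> X y -> X z ->
    (exists2 z', X z' & x `|` y `<=` z') ->
    (exists2 z'', X z'' & y `|` z `<=` z'') ->
    (exists2 z''', X z''' & x `|` z `<=` z''') ->
    X (x `|` y `|` z).

Definition stable (E : Type) (X : set (set E)) : Prop :=
  [/\ rooted X, connected_cs X, bounded_union_closed X,
      intersection_closed X & coherent X].

(* Bounded union, intersection (given rootedness) and coherence all follow
   from closure under the median (a ∩ b) ∪ (b ∩ c) ∪ (a ∩ c), which every
   stable structure has and which commutes with Δ x; rootedness is x ∈ X.
   Connectedness is the real point: for y in X with y Δ x nonempty one needs a
   single element a of y Δ x with y Δ {a} in X.  If y ⊄ x, peel elements off y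
   by connectedness until one outside x is reached, and put the peeled
   elements of x back with the bounded union ((y \ b) \ a) ∪ (x ∩ y) ⊆ y.
   If y ⊊ x, peel elements off z := x instead, until the peeled element b is
   the only one of z outside y; then y ∪ {b} = y ∪ z ⊆ x is a bounded union.
   Both descents terminate because x is finite. *)

From mathcomp Require Import all_boot.
From mathcomp Require Import boolp classical_sets cardinality.
Local Open Scope classical_set_scope.

Set Implicit Arguments.
Unset Strict Implicit.
Unset Printing Implicit Defensive.

Ltac decide_memberships e :=
  repeat match goal with
  | |- context [?A e] => is_var A;
      lazymatch goal with
      | _ : A e |- _ => fail | _ : ~ A e |- _ => fail
      | _ => case: (pselect (A e)) => ?
      end
  | |- context [e = ?a] => is_var a;
      lazymatch goal with
      | _ : e <> a |- _ => fail
      | _ => let ea := fresh in case: (pselect (e = a)) => ea; [subst a|]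
      end
  end.

Ltac mem_tauto a := rewrite /symdiff /=; decide_memberships a; tauto.

Ltac set_tauto :=
  let e := fresh "e" in
  ((apply/seteqP; split=> e) || move=> e);
  repeat match goal with H : _ `<=` _ |- _ => move: (H e); clear H end;
  rewrite /symdiff /=; decide_memberships e; tauto.

Section SymmetricDifference.
Variable E : Type.
Implicit Types x y w : set E.

Lemma symdiffKr x y : symdiff (symdiff y x) x = y.
Proof. set_tauto. Qed.

Lemma symdiff_set0l x : symdiff set0 x = x.
Proof. set_tauto. Qed.

Lemma symdiff_set0r y : symdiff y set0 = y.
Proof. set_tauto. Qed.

Lemma symdiffA x y w : symdiff (symdiff w y) x = symdiff w (symdiff x y).
Proof. set_tauto. Qed.

Lemma residualE x (X : set (set E)) w : residual x X w = X (symdiff w x).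
Proof.
apply/propext; split=> [[y Xy <-]|Xw]; first by rewrite symdiffKr.
by exists (symdiff w x); rewrite ?symdiffKr.
Qed.

End SymmetricDifference.

Section Median.
Variable E : Type.
Implicit Types a b c x : set E.

Definition median a b c : set E := (a `&` b) `|` (b `&` c) `|` (a `&` c).

Definition median_closed (X : set (set E)) : Prop :=
  forall a b c, X a -> X b -> X c -> X (median a b c).

Lemma median_symdiff a b c x :
  median (symdiff a x) (symdiff b x) (symdiff c x) = symdiff (median a b c) x.
Proof. rewrite /median; set_tauto. Qed.

Lemma median_set0r a b : median a b set0 = a `&` b.
Proof. rewrite /median; set_tauto. Qed.

Lemma median_bounded a b c : a `|` b `<=` c -> median a b c = a `|` b.
Proof. rewrite /median => abc; set_tauto. Qed.

Lemma median_unions a b c :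
  median (a `|` b) (b `|` c) (a `|` c) = a `|` b `|` c.
Proof. rewrite /median; set_tauto. Qed.

Variable X : set (set E).

Lemma coherent_median_closed :
  intersection_closed X -> coherent X -> median_closed X.
Proof.
move=> capX cohX a b c Xa Xb Xc.
apply: cohX; try exact: capX.
- by exists b => //; set_tauto.
- by exists c => //; set_tauto.
- by exists a => //; set_tauto.
Qed.

Lemma median_closed_residual x :
  median_closed X -> median_closed (residual x X).
Proof.
move=> medX a b c; rewrite !residualE -median_symdiff; exact: medX.
Qed.

Hypothesis medX : median_closed X.

Lemma median_closed_bounded_union : bounded_union_closed X.
Proof. by move=> a b c Xa Xb Xc abc; rewrite -(median_bounded abc); apply: medX. Qed.

Lemma median_closed_intersection : rooted X -> intersection_closed X.
Proof. by move=> X0 a b Xa Xb; rewrite -median_set0r; apply: medX. Qed.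

Lemma median_closed_coherent : coherent X.
Proof.
move=> a b c Xa Xb Xc [ab Xab abab] [bc Xbc bcbc] [ac Xac acac].
have cupX := median_closed_bounded_union.
rewrite -median_unions; apply: medX.
- exact: cupX Xab _.
- exact: cupX Xbc _.
- exact: cupX Xac _.
Qed.

End Median.

Section Descent.
Variable E : Type.
Implicit Types (s : seq {classic E}) (x y z u : set E).

Definition count_in s (A : set E) : nat := count (fun e => `[< A e >]) s.

Lemma count_in_setD1 s (A : set E) (b : {classic E}) :
  A b -> b \in s -> count_in s (A `\ b) < count_in s A.
Proof.
move=> Ab; elim: s => // c s IH; rewrite in_cons /count_in /= => /predU1P[<-|/IH].
- rewrite asboolF => [|[]//]; rewrite asboolT // add0n add1n ltnS.
  by apply: sub_count => e /asboolP[Ae _]; apply/asboolP.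
- rewrite -addnS; apply: leq_add.
  by case: asboolP => // -[Ac _]; rewrite asboolT.
Qed.

Variable X : set (set E).
Hypotheses (connX : connected_cs X) (cupX : bounded_union_closed X).

Lemma exists_removable_outside s x y :
  intersection_closed X -> X x -> x `<=` [set` s] -> X y -> y `\` x !=set0 ->
  exists2 a, (y `\` x) a & X (y `\ a).
Proof.
move=> capX Xx xs; have [n] := ubnP (count_in s y).
elim: n y => // n IH y lt_n Xy [e [ye nxe]].
have y0 : y <> set0 by move=> y0; rewrite y0 in ye.
have [b yb Xyb] := connX Xy y0.
have [xb|nxb] := pselect (x b); last by exists b.
have [||a [[ya _] nxa] Xyba] := IH (y `\ b) _ Xyb.
- by apply: leq_trans (count_in_setD1 yb (xs b xb)) _; rewrite -ltnS.
- by exists e; split=> //; split=> // eb; apply: nxe; rewrite eb.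
exists a => //.
suff -> : y `\ a = (y `\ b `\ a) `|` (x `&` y).
  by apply: (cupX Xyba (capX _ _ Xx Xy) Xy); set_tauto.
set_tauto.
Qed.

Lemma exists_addable_inside s y z u :
  X y -> X z -> X u -> y `|` z `<=` u -> z `<=` [set` s] -> z `\` y !=set0 ->
  exists2 a, (z `\` y) a & X (y `|` [set a]).
Proof.
move=> Xy + Xu; have [n] := ubnP (count_in s z).
elim: n z => // n IH z lt_n Xz yzu zs [e [ze nye]].
have z0 : z <> set0 by move=> z0; rewrite z0 in ze.
have [b zb Xzb] := connX Xz z0.
have [[e' zbe']|nzby] := pselect (z `\ b `\` y !=set0).
  have [|||a [[za _] nya] Xya] := IH (z `\ b) _ Xzb _ _ (ex_intro _ e' zbe').
  - by apply: leq_trans (count_in_setD1 zb (zs b zb)) _; rewrite -ltnS.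
  - by set_tauto.
  - by set_tauto.
  by exists a.
have zby : z `\ b `<=` y.
  by move=> e1 ze1; apply: contrapT => nye1; apply: nzby; exists e1.
have nyb : ~ y b.
  by have [<-|eb] := pselect (e = b); last by have := nye (zby e (conj ze eb)).
exists b => //.
suff -> : y `|` [set b] = y `|` z by apply: cupX Xu yzu.
set_tauto.
Qed.

End Descent.

Section Residual.
Variables (E : Type) (X : set (set E)).
Implicit Types x w : set E.

Lemma rooted_residual x : X x -> rooted (residual x X).
Proof. by move=> Xx; rewrite /rooted residualE symdiff_set0l. Qed.

Lemma connected_residual x :
  connected_cs X -> bounded_union_closed X -> intersection_closed X ->
  finite_set x -> X x -> connected_cs (residual x X).
Proof.
move=> connX cupX capX /(@finite_seqP {classic E})[s xs] Xx w.
rewrite residualE => Xy w0.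
have {}xs : x `<=` [set` s] by rewrite xs.
have [e we] : w !=set0 by apply/set0P/eqP.
suff [a wa Xwa] : exists2 a, w a & X (symdiff (w `\ a) x).
  by exists a; rewrite ?residualE.
have [yx|] := pselect (symdiff w x `\` x !=set0).
  have [a [ya nxa] Xya] := exists_removable_outside connX cupX capX Xx xs Xy yx.
  exists a; first by move: ya nxa; mem_tauto a.
  suff -> : symdiff (w `\ a) x = symdiff w x `\ a by [].
  set_tauto.
move=> /nonemptyPn; rewrite setD_eq0 => yx.
have xe : x e by apply: contrapT => nxe; apply: (nxe) (yx e _); left.
have [||a [xa nya] Xya] := exists_addable_inside connX cupX Xy Xx Xx _ xs.
- by set_tauto.
- by exists e; split => // -[[]|[]].
have wa : w a by move: xa nya; mem_tauto a.
exists a => //.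
suff -> : symdiff (w `\ a) x = symdiff w x `|` [set a] by [].
set_tauto.
Qed.

Lemma stable_residual x : stable X -> finite_set x -> X x -> stable (residual x X).
Proof.
move=> [X0 connX cupX capX cohX] fx Xx.
have medY : median_closed (residual x X).
  by apply: median_closed_residual; apply: coherent_median_closed.
have Y0 := rooted_residual Xx.
split => //.
- exact: connected_residual.
- exact: median_closed_bounded_union.
- exact: median_closed_intersection.
- exact: median_closed_coherent.
Qed.

Lemma residual_set0 : residual set0 X = X.
Proof. by apply/seteqP; split=> w; rewrite residualE symdiff_set0r. Qed.

Lemma residualM x y : residual y (residual x X) = residual (symdiff x y) X.
Proof. by apply/seteqP; split=> w; rewrite !residualE symdiffA. Qed.

End Residual.

Theorem mainTheorem5 (E : Type) (X : set (set E)) :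
  countable [set: E] -> stable X ->
  (forall x : set E, finite_set x -> X x -> stable (residual x X)) /\
  (* partial group action of (finite subsets of E, symmetric difference) *)
  residual set0 X = X /\
  (forall x y : set E, finite_set x -> X x -> finite_set y ->
     residual x X y ->
     residual y (residual x X) = residual (symdiff x y) X).
Proof.
move=> _ stX; split; last split.
- by move=> x; apply: stable_residual.
- exact: residual_set0.
- by move=> x y _ _ _ _; apply: residualM.
Qed.
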